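(* Let $\gamma$ be a $G$-invariant K\''ahler metric on ${\rm M}_1$ of the form $\gamma=A\,d\boldsymbol{\lambda}\cdot d\boldsymbol{\lambda}+\left(\frac{A}{1+\lambda^2}+\frac{A'}{\lambda}\right)(\boldsymbol{\lambda}\cdot d\boldsymbol{\lambda})^2+\frac{1+2\lambda^2}{4}A\,\boldsymbol{\sigma}\cdot\boldsymbol{\sigma}+\frac{1+\lambda^2}{4\lambda}A'(\boldsymbol{\lambda}\cdot\boldsymbol{\sigma})^2+A\,\boldsymbol{\lambda}\cdot(\boldsymbol{\sigma}\times d\boldsymbol{\lambda})$ for a smooth function $A=A(\lambda)$, let $\Omega(X,Y)=\gamma(JX,Y)$ be its K\''ahler form, and let $H$ be a smooth $G$-invariant function on ${\rm M}_1$, written as a function $H(\lambda)$ of $\lambda$. Then the Hamiltonian vector field $X_H$, defined by $\Omega(Y,X_H)=dH(Y)$ for all vector fields $Y$, is $$X_H=\frac{2\sqrt{1+\lambda^2}\,H'(\lambda)}{(1+2\lambda^2)A(\lambda)+(\lambda+\lambda^3)A'(\lambda)}\,\widehat{\boldsymbol{\lambda}}\cdot\boldsymbol{\theta},$$ where $\widehat{\boldsymbol{\lambda}}=\boldsymbol{\lambda}/\lambda$ and $\widehat{\boldsymbol{\lambda}}\cdot\boldsymbol{\theta}=\sum_a\widehat\lambda_a\theta_a$.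
   Context: ${\rm M}_1$ is the space of degree one rational maps $W(z)=\frac{a_{11}z+a_{12}}{a_{21}z+a_{22}}$ of $S^2=\mathbb{C}\cup\{\infty\}$, identified with $PL(2,\mathbb{C})$, with complex structure $J$ induced by the open inclusion into $\mathbb{C}P^3$, $W\mapsto[a_{11}:a_{12}:a_{21}:a_{22}]$. With $\tau_a$ the Pauli matrices, every $[M]\in PL(2,\mathbb{C})$ decomposes uniquely as $[M]=[U](\Lambda\mathbb{I}_2+\boldsymbol{\lambda}\cdot\boldsymbol{\tau})$, $[U]\in PU(2)$, $\boldsymbol{\lambda}\in\mathbb{R}^3$, $\lambda=|\boldsymbol{\lambda}|$, $\Lambda=\sqrt{1+\lambda^2}$, giving ${\rm M}_1\cong PU(2)\times\mathbb{R}^3$. $\theta_a$ are the left-invariant vector fields on $PU(2)$ with value $\frac{i}{2}\tau_a$ at the identity and $\sigma_a$ the dual left-invariant 1-forms, both transported to ${\rm M}_1$ via this product structure (so $\{\partial/\partial\lambda_a,\theta_a\}$ is a frame dual to $\{d\lambda_a,\sigma_a\}$); $\cdot,\times$ are $\mathbb{R}^3$ scalar/vector products applied componentwise, juxtaposition means symmetrized tensor product. $G$ is the group generated by $[M]\mapsto[L][M][R]$ ($[L],[R]\in PU(2)$) and $P:W(z)\mapsto\overline{W(\bar z)}$. *)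

From Stdlib Require Import Reals.
From Coquelicot Require Import Coquelicot.
Open Scope R_scope.

Record R3 := mkR3 { c1 : R; c2 : R; c3 : R }.
Definition v0 : R3 := mkR3 0 0 0.
Definition vadd (a b : R3) : R3 := mkR3 (c1 a + c1 b) (c2 a + c2 b) (c3 a + c3 b).
Definition vscale (s : R) (a : R3) : R3 := mkR3 (s * c1 a) (s * c2 a) (s * c3 a).
Definition vdot (a b : R3) : R := c1 a * c1 b + c2 a * c2 b + c3 a * c3 b.
Definition vcross (a b : R3) : R3 :=
  mkR3 (c2 a * c3 b - c3 a * c2 b) (c3 a * c1 b - c1 a * c3 b) (c1 a * c2 b - c2 a * c1 b).
Definition vnorm (a : R3) : R := sqrt (vdot a a).

Record M2 := mkM2 { e11 : C; e12 : C; e21 : C; e22 : C }.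
Definition madd (a b : M2) : M2 :=
  mkM2 (e11 a + e11 b) (e12 a + e12 b) (e21 a + e21 b) (e22 a + e22 b).
Definition mmul (a b : M2) : M2 :=
  mkM2 (e11 a * e11 b + e12 a * e21 b) (e11 a * e12 b + e12 a * e22 b)
       (e21 a * e11 b + e22 a * e21 b) (e21 a * e12 b + e22 a * e22 b).
Definition mscale (s : C) (a : M2) : M2 :=
  mkM2 (s * e11 a) (s * e12 a) (s * e21 a) (s * e22 a).
Definition madj (a : M2) : M2 :=
  mkM2 (Cconj (e11 a)) (Cconj (e21 a)) (Cconj (e12 a)) (Cconj (e22 a)).
Definition mdet (a : M2) : C := e11 a * e22 a - e12 a * e21 a.
Definition mI : M2 := mkM2 1 0 0 1.

Definition tau1 : M2 := mkM2 0 1 1 0.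
Definition tau2 : M2 := mkM2 0 (- Ci) Ci 0.
Definition tau3 : M2 := mkM2 1 0 0 (-1).
Definition vtau (v : R3) : M2 :=
  madd (mscale (RtoC (c1 v)) tau1)
       (madd (mscale (RtoC (c2 v)) tau2) (mscale (RtoC (c3 v)) tau3)).

(* U is in SU(2) (a representative of [U] in PU(2) = SU(2)/{+-1}) *)
Definition SU2 (U : M2) : Prop := mmul U (madj U) = mI /\ mdet U = 1.

Definition Lam (l : R3) : R := sqrt (1 + vdot l l).
Definition Pmat (l : R3) : M2 := madd (mscale (RtoC (Lam l)) mI) (vtau l).

(* The map M_1 ~ PU(2) x R^3 -> C^{2x2} \ 0 (then -> CP^3):
   ([U], lambda) |-> U (Lambda I + lambda . tau), i.e. [a11:a12:a21:a22]. *)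
Definition Phi (U : M2) (l : R3) : M2 := mmul U (Pmat l).

Definition CDerive (f : R -> C) (t : R) : C :=
  (Derive (fun s => fst (f s)) t, Derive (fun s => snd (f s)) t).
Definition mderive (f : R -> M2) (t : R) : M2 :=
  mkM2 (CDerive (fun s => e11 (f s)) t) (CDerive (fun s => e12 (f s)) t)
       (CDerive (fun s => e21 (f s)) t) (CDerive (fun s => e22 (f s)) t).

(* A tangent vector at a point of M_1, in the frame {d/dlambda_a, theta_a}:
   tl v = (x_a) and tth v = (xi_a) stand for  sum_a x_a d/dlambda_a + sum_a xi_a theta_a. *)
Record TV := mkTV { tl : R3; tth : R3 }.
Definition tv0 : TV := mkTV v0 v0.

(* The left-invariant field theta_a has value (i/2) tau_a at the identity, hence
   value U (i/2) tau_a at U (matrix group); by the product rule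
   d Phi (x, xi) = U ((i/2) xi.tau) P(lambda) + U d/dt|_0 P(lambda + t x). *)
Definition dPhi (U : M2) (l : R3) (v : TV) : M2 :=
  madd (mmul U (mmul (mscale (Ci / 2) (vtau (tth v))) (Pmat l)))
       (mmul U (mderive (fun t => Pmat (vadd l (vscale t (tl v)))) 0)).

(* The complex structure J induced by the open inclusion in CP^3:
   T_[M] CP^3 = C^4 / C M and J is multiplication by i there.  So
   J v = w  iff  dPhi(w) = i dPhi(v) modulo C . Phi. *)
Definition IsJ (U : M2) (l : R3) (v w : TV) : Prop :=
  exists c : C, dPhi U l w = madd (mscale Ci (dPhi U l v)) (mscale c (Phi U l)).

(* Symmetrized products: (alpha beta)(X,Y) = (alpha(X) beta(Y) + alpha(Y) beta(X))/2. *)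
Definition gamma (A : R -> R) (l : R3) (X Y : TV) : R :=
  let lam := vnorm l in
  let a := A lam in
  let a' := Derive A lam in
  let x := tl X in let xi := tth X in
  let y := tl Y in let eta := tth Y in
  a * vdot x y
  + (a / (1 + lam ^ 2) + a' / lam) * (vdot l x * vdot l y)
  + (1 + 2 * lam ^ 2) / 4 * a * vdot xi eta
  + (1 + lam ^ 2) / (4 * lam) * a' * (vdot l xi * vdot l eta)
  + a * ((vdot l (vcross xi y) + vdot l (vcross eta x)) / 2).

(* dH(Y) for the G-invariant function H([U], lambda) = h(|lambda|):
   H does not depend on [U], so only the d/dlambda-components of Y contribute. *)
Definition dH (h : R -> R) (l : R3) (Y : TV) : R :=
  Derive (fun t => h (vnorm (vadd l (vscale t (tl Y))))) 0.

(* X is the Hamiltonian vector field of H at ([U], lambda):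
   Omega(Y, X) = gamma(J Y, X) = dH(Y) for all tangent vectors Y. *)
Definition IsHamiltonianVF (A h : R -> R) (U : M2) (l : R3) (X : TV) : Prop :=
  forall Y JY : TV, IsJ U l Y JY -> gamma A l JY X = dH h l Y.

Definition XH_formula (A h : R -> R) (l : R3) : TV :=
  let lam := vnorm l in
  let coef := 2 * sqrt (1 + lam ^ 2) * Derive h lam /
              ((1 + 2 * lam ^ 2) * A lam + (lam + lam ^ 3) * Derive A lam) in
  mkTV v0 (vscale coef (vscale (/ lam) l)).

(** Under the chart ([U], λ) ↦ U (Λ I + λ·τ), the tangent vector (x, ξ) (in the frame
    ∂/∂λ_a, θ_a) is mapped to U ((a + i b)·τ) (Λ I + λ·τ), with
    a = Λ x - (λ·x / Λ) λ  and  b = ξ/2 - x × λ.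
    Since (a + i b)·τ is traceless and the chart point itself corresponds to the identity,
    the complex structure becomes J : a + i b ↦ i (a + i b), a bijection.  For a radial
    vector X = k λ·θ only the σ-terms of γ survive, and γ(JY, X) is proportional to
    λ·ξ_{JY} = 2 λ·x_Y / Λ, while dH(Y) = H'(λ) λ·x_Y / λ; matching the two gives the
    coefficient of X_H.  Uniqueness holds because Ω(Y, X) = γ(JY, X) with γ positive
    definite and J onto. *)

From Stdlib Require Import Reals Lra Psatz Nsatz Classical.
From Coquelicot Require Import Coquelicot.
Open Scope R_scope.

Lemma vdot_self_ge0 (l : R3) : 0 <= vdot l l.
Proof. destruct l as [l1 l2 l3]; unfold vdot; simpl; nra. Qed.

Lemma vdot_self_pos (l : R3) : l <> v0 -> 0 < vdot l l.
Proof.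
  destruct l as [l1 l2 l3]; unfold vdot, v0; simpl; intro Hl.
  destruct (Req_dec l1 0), (Req_dec l2 0), (Req_dec l3 0); subst; try nra.
  now exfalso; apply Hl.
Qed.

Lemma vnorm_sq (l : R3) : vnorm l ^ 2 = vdot l l.
Proof. unfold vnorm; rewrite pow2_sqrt; [reflexivity | apply vdot_self_ge0]. Qed.

Lemma vnorm_pos (l : R3) : l <> v0 -> 0 < vnorm l.
Proof. intro Hl; apply sqrt_lt_R0, vdot_self_pos, Hl. Qed.

Lemma Lam_sq (l : R3) : Lam l ^ 2 = 1 + vdot l l.
Proof. unfold Lam; rewrite pow2_sqrt; [reflexivity | pose proof (vdot_self_ge0 l); lra]. Qed.

Lemma Lam_pos (l : R3) : 0 < Lam l.
Proof. apply sqrt_lt_R0; pose proof (vdot_self_ge0 l); lra. Qed.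

Lemma Lam_vnorm (l : R3) : Lam l = sqrt (1 + vnorm l ^ 2).
Proof. now rewrite vnorm_sq. Qed.

Lemma vscaleN1K (a : R3) : vscale (-1) (vscale (-1) a) = a.
Proof. destruct a; unfold vscale; simpl; f_equal; ring. Qed.

Lemma M2_ext (a b : M2) :
  e11 a = e11 b -> e12 a = e12 b -> e21 a = e21 b -> e22 a = e22 b -> a = b.
Proof. destruct a, b; simpl; intros; subst; reflexivity. Qed.

Ltac m2_ring := apply M2_ext; simpl; ring.

Lemma mmulA (A B D : M2) : mmul A (mmul B D) = mmul (mmul A B) D.
Proof. m2_ring. Qed.

Lemma mmul1l (A : M2) : mmul mI A = A.
Proof. m2_ring. Qed.

Lemma mmul1r (A : M2) : mmul A mI = A.
Proof. m2_ring. Qed.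

Lemma mscale1 (A : M2) : mscale 1 A = A.
Proof. m2_ring. Qed.

Lemma madd_mscale0 (A B : M2) : madd A (mscale (RtoC 0) B) = A.
Proof. m2_ring. Qed.

Lemma mmul_madd_r (U A B : M2) : mmul U (madd A B) = madd (mmul U A) (mmul U B).
Proof. m2_ring. Qed.

Lemma mmul_sandwich_linear (U P A B : M2) (a b : C) :
  madd (mscale a (mmul U (mmul A P))) (mscale b (mmul U (mmul B P)))
  = mmul U (mmul (madd (mscale a A) (mscale b B)) P).
Proof. m2_ring. Qed.

Definition madjugate (U : M2) : M2 := mkM2 (e22 U) (- e12 U) (- e21 U) (e11 U).

Lemma mmul_madjugate_l (U : M2) : mmul (madjugate U) U = mscale (mdet U) mI.
Proof. unfold mdet; m2_ring. Qed.

Lemma mmul_madjugate_r (U : M2) : mmul U (madjugate U) = mscale (mdet U) mI.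
Proof. unfold mdet; m2_ring. Qed.

Lemma mmul_cancel_l (U M N : M2) : mdet U = 1 -> mmul U M = mmul U N -> M = N.
Proof.
  intros Hdet E; apply (f_equal (mmul (madjugate U))) in E.
  now rewrite !mmulA, mmul_madjugate_l, Hdet, mscale1, !mmul1l in E.
Qed.

Lemma mmul_cancel_r (P M N : M2) : mdet P = 1 -> mmul M P = mmul N P -> M = N.
Proof.
  intros Hdet E; apply (f_equal (fun X => mmul X (madjugate P))) in E.
  now rewrite <- !mmulA, mmul_madjugate_r, Hdet, mscale1, !mmul1r in E.
Qed.

Lemma mdet_Pmat (l : R3) : mdet (Pmat l) = 1.
Proof.
  pose proof (Lam_sq l) as HL; revert HL; unfold mdet, Pmat.
  generalize (Lam l); intros L HL.
  destruct l as [l1 l2 l3]; unfold vdot in HL; simpl in HL.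
  apply injective_projections; simpl; nra.
Qed.

Lemma Pmat_line_derive (l x : R3) :
  mderive (fun t => Pmat (vadd l (vscale t x))) 0
  = madd (mscale (RtoC (vdot l x / Lam l)) mI) (vtau x).
Proof.
  destruct l as [l1 l2 l3], x as [x1 x2 x3].
  assert (HL : 0 < Lam (mkR3 l1 l2 l3)) by apply Lam_pos.
  apply M2_ext; unfold CDerive; simpl; apply injective_projections; simpl;
    apply is_derive_unique; unfold Lam, vdot in *; simpl in *; auto_derive;
    try nra; rewrite ?Rmult_0_l, ?Rplus_0_r; field; lra.
Qed.

Definition wre (l : R3) (v : TV) : R3 :=
  vadd (vscale (Lam l) (tl v)) (vscale (- (vdot l (tl v) / Lam l)) l).
Definition wim (l : R3) (v : TV) : R3 :=
  vadd (vscale (/ 2) (tth v)) (vscale (-1) (vcross (tl v) l)).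
Definition wmat (p q : R3) : M2 := madd (vtau p) (mscale Ci (vtau q)).

(* Pauli algebra (p·τ)(q·τ) = (p·q) I + i (p×q)·τ, together with Λ² = 1 + λ·λ. *)
Lemma tangent_factor (l : R3) (v : TV) :
  madd (mmul (mscale (Ci / 2) (vtau (tth v))) (Pmat l))
       (madd (mscale (RtoC (vdot l (tl v) / Lam l)) mI) (vtau (tl v)))
  = mmul (wmat (wre l v) (wim l v)) (Pmat l).
Proof.
  pose proof (Lam_sq l) as HL; pose proof (Lam_pos l) as HL0.
  unfold wre, wim, wmat, Pmat.
  replace (Ci / 2)%C with ((0, / 2) : C) by (apply injective_projections; simpl; field).
  revert HL HL0; generalize (Lam l); intros L HL HL0.
  destruct v as [[x1 x2 x3] [y1 y2 y3]], l as [l1 l2 l3].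
  unfold madd, mmul, mscale, vtau, mI, tau1, tau2, tau3, vadd, vscale, vdot, vcross in *;
    simpl in *.
  assert (HLi : L * / L = 1) by (field; lra).
  unfold Rdiv; revert HLi; generalize (/ L); intros Li HLi; clear HL0.
  apply M2_ext; apply injective_projections; simpl; nsatz.
Qed.

Lemma dPhi_factor (U : M2) (l : R3) (v : TV) :
  dPhi U l v = mmul U (mmul (wmat (wre l v) (wim l v)) (Pmat l)).
Proof. unfold dPhi; now rewrite Pmat_line_derive, <- mmul_madd_r, tangent_factor. Qed.

Lemma mscale_Ci_wmat (p q : R3) : mscale Ci (wmat p q) = wmat (vscale (-1) q) p.
Proof.
  destruct p, q; unfold wmat, vtau, vscale, tau1, tau2, tau3, madd, mscale; simpl.
  apply M2_ext; simpl; apply injective_projections; simpl; ring.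
Qed.

(* (a + i b)·τ is traceless, so it is determined by its class modulo C·I. *)
Lemma wmat_eq_shift_scalar (a b p q : R3) (c : C) :
  wmat a b = madd (wmat p q) (mscale c mI) -> a = p /\ b = q.
Proof.
  destruct a as [a1 a2 a3], b as [b1 b2 b3], p as [p1 p2 p3], q as [q1 q2 q3], c as [cr ci].
  unfold wmat, vtau, tau1, tau2, tau3, madd, mscale, mI; simpl; intro E.
  injection E; intros; split; f_equal; lra.
Qed.

Lemma IsJ_iff (U : M2) (l : R3) (Y Z : TV) : SU2 U ->
  IsJ U l Y Z <-> wre l Z = vscale (-1) (wim l Y) /\ wim l Z = wre l Y.
Proof.
  intros [_ HU]; unfold IsJ.
  replace (Phi U l) with (mmul U (mmul mI (Pmat l))) by (now rewrite mmul1l).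
  rewrite !dPhi_factor; split.
  - intros [c Hc]; rewrite mmul_sandwich_linear in Hc.
    apply mmul_cancel_l, mmul_cancel_r in Hc; [| apply mdet_Pmat | exact HU].
    now rewrite mscale_Ci_wmat in Hc; apply wmat_eq_shift_scalar in Hc.
  - intros [Ere Eim]; exists (RtoC 0).
    now rewrite mmul_sandwich_linear, madd_mscale0, mscale_Ci_wmat, Ere, Eim.
Qed.

Definition wsolve (l a b : R3) : TV :=
  let x := vscale (/ Lam l) (vadd a (vscale (vdot l a) l)) in
  mkTV x (vscale 2 (vadd b (vcross x l))).

Lemma wre_wsolve (l a b : R3) : wre l (wsolve l a b) = a.
Proof.
  pose proof (Lam_sq l) as HL; pose proof (Lam_pos l) as HL0.
  unfold wre, wsolve; simpl; revert HL HL0; generalize (Lam l); intros L HL HL0.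
  destruct l as [l1 l2 l3], a as [a1 a2 a3]; unfold vadd, vscale, vdot in *; simpl in *.
  assert (HLi : L * / L = 1) by (field; lra).
  unfold Rdiv; revert HLi; generalize (/ L); intros Li HLi; clear HL0.
  f_equal; nsatz.
Qed.

Lemma wim_wsolve (l a b : R3) : wim l (wsolve l a b) = b.
Proof.
  unfold wim, wsolve; cbn [tl tth].
  generalize (vscale (/ Lam l) (vadd a (vscale (vdot l a) l))); intro x.
  destruct l, b, x; unfold vadd, vscale, vcross; simpl; f_equal; field.
Qed.

Lemma IsJ_surj (U : M2) (l : R3) (Z : TV) : SU2 U -> exists Y, IsJ U l Y Z.
Proof.
  intro HU; exists (wsolve l (wim l Z) (vscale (-1) (wre l Z))).
  now rewrite IsJ_iff, wre_wsolve, wim_wsolve, vscaleN1K.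
Qed.

Lemma vdot_wre (l : R3) (v : TV) : vdot l (wre l v) = vdot l (tl v) / Lam l.
Proof.
  pose proof (Lam_sq l) as HL; pose proof (Lam_pos l) as HL0.
  unfold wre; revert HL HL0; generalize (Lam l); intros L HL HL0.
  destruct l as [l1 l2 l3], v as [[x1 x2 x3] ?]; unfold vadd, vscale, vdot in *; simpl in *.
  assert (HLi : L * / L = 1) by (field; lra).
  unfold Rdiv; revert HLi; generalize (/ L); intros Li HLi; clear HL0.
  nsatz.
Qed.

Lemma vdot_wim (l : R3) (v : TV) : vdot l (wim l v) = vdot l (tth v) / 2.
Proof.
  destruct l, v as [[] []]; unfold wim, vadd, vscale, vcross, vdot; simpl; field.
Qed.

Lemma IsJ_radial (U : M2) (l : R3) (Y Z : TV) : SU2 U -> IsJ U l Y Z ->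
  vdot l (tth Z) = 2 * vdot l (tl Y) / Lam l.
Proof.
  intros HU HJ; apply IsJ_iff in HJ as [_ Eim]; [| exact HU].
  apply (f_equal (vdot l)) in Eim; rewrite vdot_wim, vdot_wre in Eim; lra.
Qed.

Definition radial_weight (A : R -> R) (r : R) : R :=
  (1 + 2 * r ^ 2) * A r + (r + r ^ 3) * Derive A r.

Lemma gamma_radial (A : R -> R) (l : R3) (Z : TV) (k : R) : l <> v0 ->
  gamma A l Z (mkTV v0 (vscale k l)) = k * vdot l (tth Z) * radial_weight A (vnorm l) / 4.
Proof.
  intro Hl; pose proof (vnorm_pos l Hl) as Hm; pose proof (vnorm_sq l) as Hsq.
  unfold gamma, radial_weight; cbn [tl tth].
  assert (E : vdot l (vscale k l) = k * vnorm l ^ 2)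
    by (rewrite Hsq; destruct l; unfold vdot, vscale; simpl; ring).
  rewrite E; revert Hm; generalize (vnorm l); intros m Hm.
  destruct Z as [[z1 z2 z3] [w1 w2 w3]], l as [l1 l2 l3].
  unfold v0, vdot, vscale, vcross; simpl; field; nra.
Qed.

Definition tvsub (X W : TV) : TV :=
  mkTV (vadd (tl X) (vscale (-1) (tl W))) (vadd (tth X) (vscale (-1) (tth W))).

Lemma gamma_tvsub_r (A : R -> R) (l : R3) (Z X W : TV) :
  gamma A l Z (tvsub X W) = gamma A l Z X - gamma A l Z W.
Proof.
  destruct Z as [[z1 z2 z3] [w1 w2 w3]], X as [[x1 x2 x3] [y1 y2 y3]],
    W as [[p1 p2 p3] [q1 q2 q3]].
  unfold gamma, tvsub, vadd, vscale, vdot, vcross; simpl; unfold Rdiv; ring.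
Qed.

Lemma tvsub_eq0 (X W : TV) : tvsub X W = tv0 -> X = W.
Proof.
  destruct X as [[x1 x2 x3] [y1 y2 y3]], W as [[p1 p2 p3] [q1 q2 q3]].
  unfold tvsub, tv0, v0, vadd, vscale; simpl; intro E; injection E; intros.
  f_equal; f_equal; lra.
Qed.

Lemma radial_weight_pos (A : R -> R) (l : R3) :
  (forall X : TV, X <> tv0 -> 0 < gamma A l X X) -> l <> v0 ->
  0 < radial_weight A (vnorm l).
Proof.
  intros Hpos Hl.
  assert (Hne : mkTV v0 (vscale 1 l) <> tv0).
  { destruct l; unfold tv0, v0, vscale; simpl; intro E; injection E; intros.
    apply Hl; unfold v0; f_equal; lra. }
  pose proof (Hpos _ Hne) as Hg; rewrite gamma_radial in Hg by exact Hl; cbn [tth] in Hg.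
  pose proof (vdot_self_pos l Hl) as HS.
  replace (vdot l (vscale 1 l)) with (vdot l l) in Hg
    by (destruct l; unfold vdot, vscale; simpl; ring).
  nra.
Qed.

Lemma dH_radial (h : R -> R) (l : R3) (Y : TV) : l <> v0 -> ex_derive h (vnorm l) ->
  dH h l Y = Derive h (vnorm l) * (vdot l (tl Y) / vnorm l).
Proof.
  intros Hl Hh; pose proof (vnorm_pos l Hl) as Hm; pose proof (vdot_self_pos l Hl) as HS.
  assert (Hline : is_derive (fun t => vnorm (vadd l (vscale t (tl Y)))) 0
                    (vdot l (tl Y) / vnorm l)).
  { destruct l as [l1 l2 l3], Y as [[y1 y2 y3] ?].
    unfold vnorm, vadd, vscale, vdot in *; simpl in *; auto_derive.
    - rewrite !Rmult_0_l, !Rplus_0_r; lra.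
    - rewrite !Rmult_0_l, !Rplus_0_r; field; lra. }
  assert (E0 : vadd l (vscale 0 (tl Y)) = l)
    by (destruct l, Y as [[] ?]; unfold vadd, vscale; simpl; f_equal; ring).
  assert (Houter : is_derive h (vnorm (vadd l (vscale 0 (tl Y)))) (Derive h (vnorm l)))
    by (rewrite E0; apply Derive_correct, Hh).
  unfold dH; apply is_derive_unique; rewrite Rmult_comm.
  exact (is_derive_comp h _ 0 _ _ Houter Hline).
Qed.

Lemma XH_formula_radial (A h : R -> R) (l : R3) :
  XH_formula A h l = mkTV v0
    (vscale (2 * Lam l * Derive h (vnorm l) / radial_weight A (vnorm l) / vnorm l) l).
Proof.
  unfold XH_formula, radial_weight; rewrite Lam_vnorm; f_equal.
  destruct l; unfold vscale; simpl; f_equal; unfold Rdiv; ring.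
Qed.

Lemma XH_formula_hamiltonian (A h : R -> R) (U : M2) (l : R3) :
  SU2 U -> l <> v0 -> ex_derive h (vnorm l) -> 0 < radial_weight A (vnorm l) ->
  IsHamiltonianVF A h U l (XH_formula A h l).
Proof.
  intros HU Hl Hh HD Y JY HJ.
  rewrite XH_formula_radial, gamma_radial, (IsJ_radial U l Y JY HU HJ), dH_radial
    by assumption.
  pose proof (vnorm_pos l Hl); pose proof (Lam_pos l); field; lra.
Qed.

Lemma IsHamiltonianVF_unique (A h : R -> R) (U : M2) (l : R3) (X W : TV) :
  SU2 U -> (forall Z : TV, Z <> tv0 -> 0 < gamma A l Z Z) ->
  IsHamiltonianVF A h U l X -> IsHamiltonianVF A h U l W -> X = W.
Proof.
  intros HU Hpos HX HW.
  destruct (IsJ_surj U l (tvsub X W) HU) as [Y HJ].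
  assert (Hnull : gamma A l (tvsub X W) (tvsub X W) = 0)
    by (rewrite gamma_tvsub_r, (HX _ _ HJ), (HW _ _ HJ); ring).
  apply tvsub_eq0; destruct (classic (tvsub X W = tv0)) as [| Hne]; [assumption |].
  specialize (Hpos _ Hne); lra.
Qed.

Theorem proposition5p1 (A h : R -> R)
  (HA : forall (n : nat) (r : R), 0 < r -> ex_derive_n A n r)
  (Hh : forall (n : nat) (r : R), 0 < r -> ex_derive_n h n r)
  (Hmetric : forall l : R3, l <> v0 -> forall X : TV, X <> tv0 -> 0 < gamma A l X X)
  (U : M2) (l : R3) (HU : SU2 U) (Hl : l <> v0) (X : TV) :
  IsHamiltonianVF A h U l X <-> X = XH_formula A h l.
Proof.
  pose proof (Hmetric l Hl) as Hpos.
  assert (HXH : IsHamiltonianVF A h U l (XH_formula A h l)).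
  { apply XH_formula_hamiltonian; try assumption.
    - exact (Hh 1%nat _ (vnorm_pos l Hl)).
    - exact (radial_weight_pos A l Hpos Hl). }
  split.
  - intro HX; exact (IsHamiltonianVF_unique A h U l X _ HU Hpos HX HXH).
  - now intros ->.
Qed.
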